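(* Let $k$ be a field of prime characteristic $p$. Define $T$-spaces of $k_0\langle X\rangle$ by $H_1=\{x_1^p\}^S$ and $H_{n+1}=(H_nH_1)^S$ for $n\ge1$. Then $(H_mH_n)^S=H_{m+n}$ for all $m,n\ge1$.
   Context: $X=\{x_1,x_2,\ldots\}$ is countably infinite; $k_0\langle X\rangle$ is the free associative (non-unital) $k$-algebra on $X$. A $T$-space is a $k$-subspace of $k_0\langle X\rangle$ invariant under every algebra endomorphism of $k_0\langle X\rangle$; $(A)^S$ is the $T$-space generated by a subset $A$. For subsets $A,B$, $AB=\{ab:a\in A,b\in B\}$. *)

From HB Require Import structures.
From mathcomp Require Import all_boot all_order all_algebra.
From mathcomp Require Import finmap.
Set Implicit Arguments.
Unset Strict Implicit.
Unset Printing Implicit Defensive.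
Import GRing.Theory.
Local Open Scope fset_scope.
Local Open Scope ring_scope.

(* Nonempty words over X = {x_0, x_1, x_2, ...} (variable x_i is the letter i):
   a word a w (first letter a, rest w). *)
Definition word := (nat * seq nat)%type.

Definition wcat (u v : word) : word := (u.1, u.2 ++ v.1 :: v.2).

(* k_0<X> : the free non-unital associative k-algebra on X, realized as
   finitely supported functions from nonempty words to k. *)
Definition FA (k : fieldType) := {fsfun word -> k with 0}.

Section FreeAlg.
Variable k : fieldType.

Definition fa0 : FA k := [fsfun].

Definition faadd (f g : FA k) : FA k :=
  [fsfun w in finsupp f `|` finsupp g => f w + g w].

Definition fascale (c : k) (f : FA k) : FA k :=
  [fsfun w in finsupp f => c * f w].

Definition famul (f g : FA k) : FA k :=
  [fsfun w in [fset wcat u.1 u.2 | u in finsupp f `*` finsupp g] =>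
     \sum_(u <- finsupp f `*` finsupp g | wcat u.1 u.2 == w) f u.1 * g u.2].

Definition favar (i : nat) : FA k := [fsfun w in [fset (i, [::])] => 1].

(* f ^ n for n >= 1 (f^0 is not defined in a non-unital algebra; we set it to f) *)
Definition fapow (f : FA k) (n : nat) : FA k := iter n.-1 (famul f) f.

Definition alg_endo (phi : FA k -> FA k) : Prop :=
  (forall f g, phi (faadd f g) = faadd (phi f) (phi g)) /\
  (forall c f, phi (fascale c f) = fascale c (phi f)) /\
  (forall f g, phi (famul f g) = famul (phi f) (phi g)).

Definition subspace (V : FA k -> Prop) : Prop :=
  V fa0 /\ (forall f g, V f -> V g -> V (faadd f g)) /\
  (forall c f, V f -> V (fascale c f)).

Definition Tspace (V : FA k -> Prop) : Prop :=
  subspace V /\ forall phi, alg_endo phi -> forall f, V f -> V (phi f).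

Definition Tgen (A : FA k -> Prop) : FA k -> Prop :=
  fun f => forall V, Tspace V -> (forall g, A g -> V g) -> V f.

Definition setmul (A B : FA k -> Prop) : FA k -> Prop :=
  fun f => exists a b, A a /\ B b /\ f = famul a b.

Definition H1 (p : nat) : FA k -> Prop := Tgen (fun f => f = fapow (favar 1) p).

(* Hrec p n = H_{n+1} *)
Fixpoint Hrec (p : nat) (n : nat) : FA k -> Prop :=
  match n with
  | 0 => H1 p
  | n'.+1 => Tgen (setmul (Hrec p n') (H1 p))
  end.

Definition H (p n : nat) : FA k -> Prop := Hrec p n.-1.

End FreeAlg.

From mathcomp Require Import all_boot all_order all_algebra.
From mathcomp Require Import finmap.
Set Implicit Arguments.
Unset Strict Implicit.
Unset Printing Implicit Defensive.
Import GRing.Theory.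
Local Open Scope fset_scope.
Local Open Scope ring_scope.

(* The identity follows by induction on n from associativity of the product
   and the two rules (U (W)^S)^S = (U W)^S and ((A)^S W)^S = (A W)^S, valid
   when U, resp. W, is a T-space.  For the first rule, let X be a T-space
   containing U W; the b with U b contained in X form a subspace, and this
   subspace is stable under every endomorphism phi.  Indeed, an endomorphism
   is the substitution of its values at the variables, so if sigma shifts all
   variables past those occurring in b, some endomorphism chi undoes sigma and
   agrees with phi on b; then u phi(b) = chi (sigma(u) b) lies in X. *)

Lemma big_fsetM (R : Type) (idx : R) (op : Monoid.com_law idx) (I J : choiceType)
    (A : {fset I}) (B : {fset J}) (F : I -> J -> R) :
  \big[op/idx]_(u <- A `*` B) F u.1 u.2 =
  \big[op/idx]_(a <- A) \big[op/idx]_(b <- B) F a b.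
Proof.
transitivity (\big[op/idx]_(u <- [seq (a, b) | a <- A, b <- B]) F u.1 u.2);
  last exact: big_allpairs.
apply/perm_big/uniq_perm; first exact: fset_uniq.
  by rewrite allpairs_uniq ?fset_uniq // => -[? ?] [? ?] _ _ [-> ->].
move=> [a b]; rewrite in_fsetM /=; apply/andP/allpairsP => [[aA bB]|].
  by exists (a, b).
by case=> -[a' b'] /= [aA bB [-> ->]].
Qed.

Lemma sum_fset_if_eq (R : nmodType) (I : choiceType) (S : {fset I}) (F : I -> R) i :
  i \in S -> \sum_(x <- S) (if i == x then F x else 0) = F i.
Proof.
move=> iS; rewrite (big_fsetD1 _ iS) /= eqxx big1_fset ?addr0 // => x.
by rewrite in_fsetD1 eq_sym => /andP[/negbTE -> _].
Qed.

Section FreeAlgebra.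
Variable k : fieldType.
Implicit Types (f g h : FA k) (w x : word) (A B C S : {fset word}).

Lemma fa0E w : fa0 k w = 0.
Proof. by rewrite fsfunE. Qed.

Lemma faaddE f g w : faadd f g w = f w + g w.
Proof.
rewrite fsfunE in_fsetU; case: ifP => // /negbT.
by rewrite negb_or => /andP[/fsfun_dflt -> /fsfun_dflt ->]; rewrite addr0.
Qed.

Lemma fascaleE c f w : fascale c f w = c * f w.
Proof. by rewrite fsfunE; case: ifP => // /negbT /fsfun_dflt ->; rewrite mulr0. Qed.

Lemma favarE i w : favar k i w = (w == (i, [::]))%:R.
Proof. by rewrite fsfunE in_fset1; case: eqP. Qed.

Lemma finsupp_subP f S : (forall w, w \notin S -> f w = 0) -> finsupp f `<=` S.
Proof.
move=> f0; apply/fsubsetP => w; rewrite mem_finsupp.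
by apply: contraR => /f0 ->; rewrite eqxx.
Qed.

Lemma wcatA w1 w2 w3 : wcat (wcat w1 w2) w3 = wcat w1 (wcat w2 w3).
Proof. by rewrite /wcat /= -catA. Qed.

Lemma famulE f g A B w : finsupp f `<=` A -> finsupp g `<=` B ->
  famul f g w =
  \sum_(a <- A) \sum_(b <- B) (if wcat a b == w then f a * g b else 0).
Proof.
move=> fA gB; rewrite fsfunE.
have -> : (if w \in [fset wcat u.1 u.2 | u in finsupp f `*` finsupp g] then
    \sum_(u <- finsupp f `*` finsupp g | wcat u.1 u.2 == w) f u.1 * g u.2
    else 0) =
  \sum_(u <- finsupp f `*` finsupp g) (if wcat u.1 u.2 == w then f u.1 * g u.2 else 0).
  rewrite -big_mkcond; case: imfsetP => // wN.
  by rewrite big1_fset // => u uS /eqP wu; case: wN; exists u.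
have fgAB : finsupp f `*` finsupp g `<=` A `*` B.
  by apply/fsubsetP => u; rewrite !in_fsetM => /andP[/(fsubsetP fA) -> /(fsubsetP gB)].
rewrite (big_fset_incl _ fgAB); first exact: big_fsetM.
move=> u _; rewrite in_fsetM negb_and.
by case/orP => /fsfun_dflt ->; rewrite ?mulr0 ?mul0r; case: ifP.
Qed.

Lemma finsupp_faadd f g : finsupp (faadd f g) `<=` finsupp f `|` finsupp g.
Proof. exact: finsupp_sub. Qed.

Lemma finsupp_fascale c f : finsupp (fascale c f) `<=` finsupp f.
Proof. exact: finsupp_sub. Qed.

Lemma finsupp_favar i : finsupp (favar k i) `<=` [fset (i, [::])].
Proof. exact: finsupp_sub. Qed.

Lemma famulDl f g h : famul (faadd f g) h = faadd (famul f h) (famul g h).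
Proof.
apply/fsfunP => w; have hh := fsubset_refl (finsupp h).
rewrite faaddE (famulE w (finsupp_faadd f g) hh).
rewrite (famulE w (fsubsetUl _ (finsupp g)) hh) (famulE w (fsubsetUr (finsupp f) _) hh).
rewrite -big_split; apply: eq_bigr => a _; rewrite -big_split; apply: eq_bigr => b _.
by rewrite faaddE; case: ifP => _; rewrite /= ?mulrDl ?addr0.
Qed.

Lemma famulDr f g h : famul h (faadd f g) = faadd (famul h f) (famul h g).
Proof.
apply/fsfunP => w; have hh := fsubset_refl (finsupp h).
rewrite faaddE (famulE w hh (finsupp_faadd f g)).
rewrite (famulE w hh (fsubsetUl _ (finsupp g))) (famulE w hh (fsubsetUr (finsupp f) _)).
rewrite -big_split; apply: eq_bigr => a _; rewrite -big_split; apply: eq_bigr => b _.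
by rewrite faaddE; case: ifP => _; rewrite /= ?mulrDr ?addr0.
Qed.

Lemma famulZl c f g : famul (fascale c f) g = fascale c (famul f g).
Proof.
apply/fsfunP => w; have gg := fsubset_refl (finsupp g).
rewrite fascaleE (famulE w (finsupp_fascale c f) gg) (famulE w (fsubset_refl _) gg).
rewrite mulr_sumr; apply: eq_bigr => a _; rewrite mulr_sumr; apply: eq_bigr => b _.
by rewrite fascaleE; case: ifP; rewrite ?mulr0 ?mulrA.
Qed.

Lemma famulZr c f g : famul f (fascale c g) = fascale c (famul f g).
Proof.
apply/fsfunP => w; have ff := fsubset_refl (finsupp f).
rewrite fascaleE (famulE w ff (finsupp_fascale c g)) (famulE w ff (fsubset_refl _)).
rewrite mulr_sumr; apply: eq_bigr => a _; rewrite mulr_sumr; apply: eq_bigr => b _.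
by rewrite fascaleE; case: ifP => _; rewrite ?mulr0 // mulrCA.
Qed.

Lemma finsupp_fa0 : finsupp (fa0 k) = fset0.
Proof. exact: finsupp0. Qed.

Lemma famul0l f : famul (fa0 k) f = fa0 k.
Proof.
apply/fsfunP => w.
by rewrite fa0E (famulE w (fsubset_refl _) (fsubset_refl _)) finsupp_fa0 big_seq_fset0.
Qed.

Lemma famul0r f : famul f (fa0 k) = fa0 k.
Proof.
apply/fsfunP => w; rewrite fa0E (famulE w (fsubset_refl _) (fsubset_refl _)).
by rewrite finsupp_fa0 big1 // => a _; rewrite big_seq_fset0.
Qed.

Lemma famulMlE f g h A B C w :
  finsupp f `<=` A -> finsupp g `<=` B -> finsupp h `<=` C ->
  famul (famul f g) h w = \sum_(a <- A) \sum_(b <- B) \sum_(c <- C)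
    (if wcat (wcat a b) c == w then f a * g b * h c else 0).
Proof.
move=> fA gB hC; set X := finsupp (famul f g) `|` [fset wcat u.1 u.2 | u in A `*` B].
rewrite (famulE w (fsubsetUl _ _ : _ `<=` X) hC).
have expand x c : (if wcat x c == w then famul f g x * h c else 0) =
    \sum_(a <- A) \sum_(b <- B) (if wcat a b == x then
      if wcat x c == w then f a * g b * h c else 0 else 0).
  rewrite (famulE x fA gB); case: ifP => _; last first.
    by rewrite big1 // => ? _; rewrite big1 // => ? _; case: ifP.
  rewrite mulr_suml; apply: eq_bigr => a _; rewrite mulr_suml; apply: eq_bigr => b _.
  by case: ifP; rewrite ?mul0r.
under eq_bigr => x _ do under eq_bigr => c _ do rewrite expand.
under eq_bigr => x _ do rewrite exchange_big.
under eq_bigr => x _ do under eq_bigr => a _ do rewrite exchange_big.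
rewrite exchange_big; apply: eq_big_seq => a aA.
rewrite exchange_big; apply: eq_big_seq => b bB.
rewrite exchange_big; apply: eq_bigr => c _; apply: sum_fset_if_eq.
by rewrite inE; apply/orP; right; apply/imfsetP; exists (a, b); rewrite ?in_fsetM ?aA.
Qed.

Lemma famulMrE f g h A B C w :
  finsupp f `<=` A -> finsupp g `<=` B -> finsupp h `<=` C ->
  famul f (famul g h) w = \sum_(a <- A) \sum_(b <- B) \sum_(c <- C)
    (if wcat a (wcat b c) == w then f a * g b * h c else 0).
Proof.
move=> fA gB hC; set Y := finsupp (famul g h) `|` [fset wcat u.1 u.2 | u in B `*` C].
rewrite (famulE w fA (fsubsetUl _ _ : _ `<=` Y)); apply: eq_bigr => a _.
have expand y : (if wcat a y == w then f a * famul g h y else 0) =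
    \sum_(b <- B) \sum_(c <- C) (if wcat b c == y then
      if wcat a y == w then f a * g b * h c else 0 else 0).
  rewrite (famulE y gB hC); case: ifP => _; last first.
    by rewrite big1 // => ? _; rewrite big1 // => ? _; case: ifP.
  rewrite mulr_sumr; apply: eq_bigr => b _; rewrite mulr_sumr; apply: eq_bigr => c _.
  by case: ifP; rewrite ?mulr0 ?mulrA.
under eq_bigr => y _ do rewrite expand.
rewrite exchange_big; apply: eq_big_seq => b bB.
rewrite exchange_big; apply: eq_big_seq => c cC; apply: sum_fset_if_eq.
by rewrite inE; apply/orP; right; apply/imfsetP; exists (b, c); rewrite ?in_fsetM ?bB.
Qed.

Lemma famulA f g h : famul (famul f g) h = famul f (famul g h).
Proof.
apply/fsfunP => w; have ff := fsubset_refl (finsupp f).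
have gg := fsubset_refl (finsupp g); have hh := fsubset_refl (finsupp h).
rewrite (famulMlE w ff gg hh) (famulMrE w ff gg hh).
by under eq_bigr do under eq_bigr do under eq_bigr do rewrite wcatA.
Qed.

Lemma fascale0 f : fascale 0 f = fa0 k.
Proof. by apply/fsfunP => w; rewrite fascaleE fa0E mul0r. Qed.

Lemma endo0 phi : alg_endo phi -> phi (fa0 k) = fa0 k.
Proof. by move=> [_ [phiZ _]]; rewrite -{1}(fascale0 (fa0 k)) phiZ fascale0. Qed.

Lemma big_faaddE (I : Type) (s : seq I) (F : I -> FA k) w :
  (\big[@faadd k/fa0 k]_(i <- s) F i) w = \sum_(i <- s) F i w.
Proof. by apply: (big_morph (fun f => f w)) => [f g|]; rewrite ?faaddE ?fa0E. Qed.

Definition mon (sg : nat -> FA k) w : FA k :=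
  foldl (fun acc i => famul acc (sg i)) (sg w.1) w.2.

Lemma mon_cat sg w1 w2 : mon sg (wcat w1 w2) = famul (mon sg w1) (mon sg w2).
Proof.
rewrite /mon /= foldl_cat /=; elim: w2.2 (sg w2.1) => [|i l IHl] g //=.
by rewrite -IHl famulA.
Qed.

Lemma endo_mon phi sg w : alg_endo phi ->
  phi (mon sg w) = mon (fun i => phi (sg i)) w.
Proof.
move=> [_ [_ phiM]]; rewrite /mon; elim: w.2 (sg w.1) => [|i l IHl] g //=.
by rewrite IHl phiM.
Qed.

Lemma eq_in_mon sg tau w : {in w.1 :: w.2, sg =1 tau} -> mon sg w = mon tau w.
Proof.
case: w => a l /= eq_st; rewrite /mon /= eq_st ?mem_head //.
have {eq_st} : {in l, sg =1 tau} by move=> i il; apply: eq_st; rewrite inE il orbT.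
elim: l (tau a) => [|i l IHl] g //= eq_st.
by rewrite eq_st ?mem_head // IHl // => j jl; apply: eq_st; rewrite inE jl orbT.
Qed.

Lemma mon_favarE w x : mon (favar k) w x = (x == w)%:R.
Proof.
case: w => a l; elim/last_ind: l x => [|l b IHl] x; first by rewrite /mon favarE.
have -> : mon (favar k) (a, rcons l b) = famul (mon (favar k) (a, l)) (favar k b).
  by rewrite /mon /= foldl_rcons.
have aS : finsupp (mon (favar k) (a, l)) `<=` [fset (a, l)].
  by apply: finsupp_subP => y; rewrite in_fset1 IHl => /negbTE ->.
rewrite (famulE x aS (finsupp_favar b)) !big_seq_fset1 IHl favarE !eqxx mulr1 /wcat /= cats1.
by rewrite eq_sym; case: eqP.
Qed.

Definition fasubst (sg : nat -> FA k) f : FA k :=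
  \big[@faadd k/fa0 k]_(w <- finsupp f) fascale (f w) (mon sg w).

Lemma fasubstE sg f S x : finsupp f `<=` S ->
  fasubst sg f x = \sum_(w <- S) f w * mon sg w x.
Proof.
move=> fS; rewrite big_faaddE; under eq_bigr do rewrite fascaleE.
by rewrite (big_fset_incl _ fS) // => w _ /fsfun_dflt ->; rewrite mul0r.
Qed.

Lemma fasubstD sg f g : fasubst sg (faadd f g) = faadd (fasubst sg f) (fasubst sg g).
Proof.
apply/fsfunP => x; rewrite faaddE (fasubstE _ x (finsupp_faadd f g)).
rewrite (fasubstE _ x (fsubsetUl _ (finsupp g))) (fasubstE _ x (fsubsetUr (finsupp f) _)).
by rewrite -big_split; apply: eq_bigr => w _; rewrite faaddE mulrDl.
Qed.

Lemma fasubstZ sg c f : fasubst sg (fascale c f) = fascale c (fasubst sg f).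
Proof.
apply/fsfunP => x; rewrite fascaleE (fasubstE _ x (finsupp_fascale c f)).
rewrite (fasubstE _ x (fsubset_refl _)) mulr_sumr.
by apply: eq_bigr => w _; rewrite fascaleE mulrA.
Qed.

Lemma fasubstM sg f g : fasubst sg (famul f g) = famul (fasubst sg f) (fasubst sg g).
Proof.
have -> : famul (fasubst sg f) (fasubst sg g) =
    \big[@faadd k/fa0 k]_(a <- finsupp f) \big[@faadd k/fa0 k]_(b <- finsupp g)
      fascale (f a * g b) (mon sg (wcat a b)).
  rewrite /fasubst.
  rewrite (big_morph (fun h => famul h (fasubst sg g)) (fun u v => famulDl u v _) (famul0l _)).
  apply: eq_bigr => a _.
  rewrite (big_morph (famul (fascale (f a) (mon sg a))) (fun u v => famulDr u v _) (famul0r _)).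
  apply: eq_bigr => b _; rewrite famulZl famulZr mon_cat.
  by apply/fsfunP => y; rewrite !fascaleE mulrA.
apply/fsfunP => x.
set W := finsupp (famul f g) `|` [fset wcat u.1 u.2 | u in finsupp f `*` finsupp g].
rewrite (fasubstE _ x (fsubsetUl _ _ : _ `<=` W)).
under [LHS]eq_bigr => w _ do rewrite (famulE w (fsubset_refl _) (fsubset_refl _)) mulr_suml.
rewrite exchange_big big_faaddE; apply: eq_big_seq => a af.
under eq_bigr => w _ do rewrite mulr_suml.
rewrite exchange_big big_faaddE; apply: eq_big_seq => b bg; rewrite fascaleE.
have abW : wcat a b \in W.
  by rewrite inE; apply/orP; right; apply/imfsetP; exists (a, b); rewrite ?in_fsetM ?af.
rewrite -(sum_fset_if_eq (fun w => f a * g b * mon sg w x) abW).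
by apply: eq_bigr => w _; case: ifP; rewrite ?mul0r.
Qed.

Lemma fasubst_endo sg : alg_endo (fasubst sg).
Proof. by split; [exact: fasubstD | split; [exact: fasubstZ | exact: fasubstM]]. Qed.

Lemma fasubst_favar sg i : fasubst sg (favar k i) = sg i.
Proof.
by apply/fsfunP => x; rewrite (fasubstE _ x (finsupp_favar i)) big_seq_fset1 favarE eqxx mul1r.
Qed.

Lemma fasubst_favar_id f : fasubst (favar k) f = f.
Proof.
apply/fsfunP => x; have xS : x \in finsupp f `|` [fset x] by rewrite !inE eqxx orbT.
rewrite (fasubstE _ x (fsubsetUl _ _ : _ `<=` _ `|` [fset x])) -[RHS](sum_fset_if_eq f xS).
by apply: eq_bigr => w _; rewrite mon_favarE; case: eqP; rewrite ?mulr1 ?mulr0.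
Qed.

Lemma endo_fasubst phi f : alg_endo phi -> phi f = fasubst (fun i => phi (favar k i)) f.
Proof.
move=> phiE; have [phiD [phiZ _]] := phiE.
rewrite -{1}(fasubst_favar_id f) /fasubst (big_morph phi phiD (endo0 phiE)).
by apply: eq_bigr => w _; rewrite phiZ endo_mon.
Qed.

Lemma eq_endo_on_vars phi psi f : alg_endo phi -> alg_endo psi ->
  (forall w i, w \in finsupp f -> i \in w.1 :: w.2 ->
     phi (favar k i) = psi (favar k i)) ->
  phi f = psi f.
Proof.
move=> phiE psiE eq_vars; rewrite (endo_fasubst f phiE) (endo_fasubst f psiE).
apply: eq_big_seq => w wf; congr fascale; apply: eq_in_mon => i.
exact: eq_vars.
Qed.

Lemma endo_id : alg_endo (fun f : FA k => f).
Proof. by []. Qed.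

Lemma endo_comp phi psi : alg_endo phi -> alg_endo psi ->
  alg_endo (fun f => phi (psi f)).
Proof.
move=> [phiD [phiZ phiM]] [psiD [psiZ psiM]].
by split; [|split] => *; rewrite ?psiD ?psiZ ?psiM ?phiD ?phiZ ?phiM.
Qed.

Definition var_bound f : nat :=
  (\max_(w <- finsupp f) \max_(i <- w.1 :: w.2) i.+1)%N.

Lemma var_bound_gt f w i :
  w \in finsupp f -> i \in w.1 :: w.2 -> (i < var_bound f)%N.
Proof.
move=> wf iw; rewrite /var_bound.
apply: leq_trans (leq_bigmax_seq (P := xpredT) _ wf isT).
exact: (leq_bigmax_seq (P := xpredT) _ iw isT).
Qed.

Lemma endo_shift_separation phi f : alg_endo phi ->
  exists sigma chi, [/\ alg_endo sigma, alg_endo chi, chi f = phi f & cancel sigma chi].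
Proof.
move=> phiE; pose N := var_bound f.
pose sigma := fasubst (fun i => favar k (N + i)).
pose chi := fasubst (fun j => if (j < N)%N then phi (favar k j) else favar k (j - N)).
exists sigma, chi; split; [exact: fasubst_endo | exact: fasubst_endo | |].
  apply: eq_endo_on_vars => // [|w i wf iw]; first exact: fasubst_endo.
  by rewrite /chi fasubst_favar (var_bound_gt wf iw).
move=> g; apply: (@eq_endo_on_vars (fun h => chi (sigma h)) (fun h => h)) => [||w i _ _].
- exact: endo_comp (fasubst_endo _) (fasubst_endo _).
- exact: endo_id.
- by rewrite /chi /sigma !fasubst_favar ltnNge leq_addr addKn.
Qed.

End FreeAlgebra.

Section TSpaces.
Variable k : fieldType.
Implicit Types (f g : FA k) (A B C U V W X : FA k -> Prop).

Lemma subset_Tgen A f : A f -> Tgen A f.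
Proof. by move=> Af V _; apply. Qed.

Lemma Tspace_Tgen A : Tspace (Tgen A).
Proof.
split; [split; [|split]|].
- by move=> V [[V0 _] _].
- move=> f g Af Ag V TV AV; have [[_ [VD _]] _] := TV.
  by apply: VD; [apply: Af | apply: Ag].
- by move=> c f Af V TV AV; have [[_ [_ VZ]] _] := TV; apply: VZ; apply: Af.
- by move=> phi phiE f Af V TV AV; have [_ V_endo] := TV; apply: V_endo => //; apply: Af.
Qed.

Lemma Tgen_subset A V : Tspace V -> (forall f, A f -> V f) -> forall f, Tgen A f -> V f.
Proof. by move=> TV AV f; apply. Qed.

Section BilinearClosure.
Variable mul : FA k -> FA k -> FA k.
Hypothesis mul0r : forall u, mul u (fa0 k) = fa0 k.
Hypothesis mulDr : forall f g u, mul u (faadd f g) = faadd (mul u f) (mul u g).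
Hypothesis mulZr : forall c u f, mul u (fascale c f) = fascale c (mul u f).
Hypothesis endo_mul :
  forall phi u f, alg_endo phi -> phi (mul u f) = mul (phi u) (phi f).

Lemma mul_Tgen_closed U W X : Tspace U -> Tspace X ->
  (forall u w, U u -> W w -> X (mul u w)) ->
  forall u w, U u -> Tgen W w -> X (mul u w).
Proof.
move=> [_ U_endo] [[X0 [XD XZ]] X_endo] UWX u w Uu Ww.
pose Y w := forall u, U u -> X (mul u w).
suff TY : Tspace Y by apply: (Ww Y TY) => // w' Ww' u' Uu'; apply: UWX.
split; [split; [|split]|].
- by move=> v _; rewrite mul0r.
- by move=> f g Yf Yg v Uv; rewrite mulDr; apply: XD; [apply: Yf | apply: Yg].
- by move=> c f Yf v Uv; rewrite mulZr; apply/XZ/Yf.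
move=> phi phiE f Yf v Uv.
have [sigma [chi [sigmaE chiE chif sigmaK]]] := endo_shift_separation f phiE.
by rewrite -chif -(sigmaK v) -endo_mul //; apply/X_endo/Yf/U_endo.
Qed.

End BilinearClosure.

Lemma Tgen_setmul_Tgenr U W : Tspace U ->
  forall f, Tgen (setmul U (Tgen W)) f <-> Tgen (setmul U W) f.
Proof.
move=> TU f; split; apply: Tgen_subset (Tspace_Tgen _) _ f => _ [u [w [Uu [Ww ->]]]].
  apply: (mul_Tgen_closed (@famul0r k) (@famulDr k) (@famulZr k) _ TU (Tspace_Tgen _) _ Uu Ww).
    by move=> phi u' w' [_ [_ phiM]].
  by move=> u' w' Uu' Ww'; apply: subset_Tgen; exists u', w'.
by apply: subset_Tgen; exists u, w; do !split => //; apply: subset_Tgen.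
Qed.

Lemma Tgen_setmul_Tgenl A W : Tspace W ->
  forall f, Tgen (setmul (Tgen A) W) f <-> Tgen (setmul A W) f.
Proof.
move=> TW f; split; apply: Tgen_subset (Tspace_Tgen _) _ f => _ [a [w [Aa [Ww ->]]]].
  apply: (@mul_Tgen_closed (fun u f => famul f u) (@famul0l k) (@famulDl k)
    (fun c u f => famulZl c f u) _ _ _ _ TW (Tspace_Tgen _) _ w a Ww Aa).
    by move=> phi u' w' [_ [_ phiM]] /=.
  by move=> w' a' Ww' Aa'; apply: subset_Tgen; exists a', w'.
by apply: subset_Tgen; exists a, w; do !split => //; apply: subset_Tgen.
Qed.

Lemma Tgen_setmulA A B C f :
  Tgen (setmul (setmul A B) C) f <-> Tgen (setmul A (setmul B C)) f.
Proof.
split; apply: Tgen_subset (Tspace_Tgen _) _ f.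
  move=> _ [_ [c [[a [b [Aa [Bb ->]]]] [Cc ->]]]]; rewrite famulA.
  by apply: subset_Tgen; exists a, (famul b c); do !split => //; exists b, c.
move=> _ [a [_ [Aa [[b [c [Bb [Cc ->]]]] ->]]]]; rewrite -famulA.
by apply: subset_Tgen; exists (famul a b), c; do !split => //; exists a, b.
Qed.

Lemma Tgen_setmul_extl A A' B : (forall f, A f <-> A' f) ->
  forall f, Tgen (setmul A B) f <-> Tgen (setmul A' B) f.
Proof.
move=> eqA f; split; apply: Tgen_subset (Tspace_Tgen _) _ f => _ [a [b [Aa [Bb ->]]]].
  by apply: subset_Tgen; exists a, b; do !split => //; apply/eqA.
by apply: subset_Tgen; exists a, b; do !split => //; apply/eqA.
Qed.

Lemma H_succ p n : @H k p n.+2 = Tgen (setmul (H p n.+1) (H p 1)).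
Proof. by []. Qed.

Lemma Tspace_H p n : Tspace (@H k p n).
Proof. by rewrite /H; case: n.-1 => *; apply: Tspace_Tgen. Qed.

End TSpaces.

Theorem lemma4p2 (k : fieldType) (p : nat) (hp : (p \in [pchar k])%R)
  (m n : nat) (hm : (1 <= m)%N) (hn : (1 <= n)%N) :
  forall f : FA k, Tgen (setmul (H p m) (H p n)) f <-> H p (m + n) f.
Proof.
case: m hm => // m _; case: n hn => // n _.
elim: n => [|n IHn] f; first by rewrite addn1.
rewrite [H p n.+2]H_succ (Tgen_setmul_Tgenr _ (Tspace_H k p m.+1)) -Tgen_setmulA.
rewrite -(Tgen_setmul_Tgenl _ (Tspace_H k p 1)).
have -> : (m.+1 + n.+2 = (m + n.+1).+2)%N by rewrite addSn addnS.
exact: Tgen_setmul_extl IHn f.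
Qed.
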